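(* Let $\Gamma$ be a graph and let $s\neq t$ be vertices of $\Gamma$. Then the subgroups $S_5(s)$ and $S_5(t)$ are not conjugate in $G(C_\Gamma)$.
   Context: Let $\Gamma$ be a graph with vertex set $S$ and symmetric adjacency relation (loops, if present, are ignored; ''adjacent'' refers to distinct vertices). $G(C_\Gamma)$ is the group with generators $s_1,s_2,s_3,s_4$ for each $s\in S$ and exactly the following relations: every generator is an involution; for each $s\in S$, $(s_is_{i+1})^3=e$ for $i=1,2,3$ and $(s_is_j)^2=e$ for $|i-j|\ge2$; for all distinct $s,t\in S$, $(s_4t_4)^2=e$; for all distinct adjacent $s,t\in S$, $(s_1t_1)^2=(s_1t_3)^2=(s_3t_1)^2=(s_3t_3)^2=e$. For $s\in S$, $S_5(s)=\langle s_1,s_2,s_3,s_4\rangle\le G(C_\Gamma)$ (isomorphic to $S_5$). *)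

(* The group G(C_Gamma) is realised as the quotient of the
   free monoid on the generators s_i (s : S, i = 1..4) by the congruence
   generated by the relators r = e.  Since every generator is an
   involution (relator [g;g]), this monoid quotient is exactly the group
   given by the presentation; the inverse of the class of a word w is the
   class of (rev w). *)
From Stdlib Require Import List.
Import ListNotations.

Inductive idx := I1 | I2 | I3 | I4.

Definition gen (S : Type) := (S * idx)%type.

Definition pw2 {A} (a b : A) : list A := [a; b; a; b].
Definition pw3 {A} (a b : A) : list A := [a; b; a; b; a; b].

Inductive relator {S : Type} (adj : S -> S -> Prop) : list (gen S) -> Prop :=
  | rel_inv   : forall (s : S) (i : idx), relator adj [(s, i); (s, i)]
  | rel_12    : forall s, relator adj (pw3 (s, I1) (s, I2))
  | rel_23    : forall s, relator adj (pw3 (s, I2) (s, I3))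
  | rel_34    : forall s, relator adj (pw3 (s, I3) (s, I4))
  | rel_13    : forall s, relator adj (pw2 (s, I1) (s, I3))
  | rel_14    : forall s, relator adj (pw2 (s, I1) (s, I4))
  | rel_24    : forall s, relator adj (pw2 (s, I2) (s, I4))
  | rel_44    : forall s t, s <> t -> relator adj (pw2 (s, I4) (t, I4))
  | rel_11    : forall s t, s <> t -> adj s t -> relator adj (pw2 (s, I1) (t, I1))
  | rel_13'   : forall s t, s <> t -> adj s t -> relator adj (pw2 (s, I1) (t, I3))
  | rel_31    : forall s t, s <> t -> adj s t -> relator adj (pw2 (s, I3) (t, I1))
  | rel_33    : forall s t, s <> t -> adj s t -> relator adj (pw2 (s, I3) (t, I3)).

Inductive geq {S : Type} (adj : S -> S -> Prop) : list (gen S) -> list (gen S) -> Prop :=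
  | geq_refl  : forall w, geq adj w w
  | geq_sym   : forall u v, geq adj u v -> geq adj v u
  | geq_trans : forall u v w, geq adj u v -> geq adj v w -> geq adj u w
  | geq_rel   : forall u r v, relator adj r -> geq adj (u ++ r ++ v) (u ++ v).

Definition in_S5 {S : Type} (adj : S -> S -> Prop) (s : S) (x : list (gen S)) : Prop :=
  exists w : list (gen S), Forall (fun g => fst g = s) w /\ geq adj x w.

Definition S5_conjugate {S : Type} (adj : S -> S -> Prop) (s t : S) : Prop :=
  exists g : list (gen S),
    forall x : list (gen S),
      in_S5 adj t x <-> exists y, in_S5 adj s y /\ geq adj x (g ++ y ++ rev g).

(* Sending every generator s_i to 1 and every other generator to 0 defines a
   homomorphism from G(C_Gamma) onto Z/2: each defining relator contains an
   even number of letters at the vertex s.  This homomorphism takes the value 1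
   on s_1 and hence on every conjugate of s_1, but vanishes on all of S_5(t)
   when t <> s, so no conjugate of S_5(s) is contained in S_5(t). *)
From Stdlib Require Import List Bool ClassicalDescription.
Import ListNotations.

Section VertexParity.

Variable S : Type.
Variable s : S.

Definition at_vertex (g : gen S) : bool :=
  if excluded_middle_informative (fst g = s) then true else false.

Definition vertex_parity (w : list (gen S)) : bool :=
  fold_right (fun g b => xorb (at_vertex g) b) false w.

Lemma at_vertex_true (i : idx) : at_vertex (s, i) = true.
Proof.
  unfold at_vertex; destruct (excluded_middle_informative _); [reflexivity | tauto].
Qed.

Lemma at_vertex_false (g : gen S) : fst g <> s -> at_vertex g = false.
Proof.
  intros H; unfold at_vertex; destruct (excluded_middle_informative _); tauto.
Qed.

Lemma vertex_parity_app (u v : list (gen S)) :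
  vertex_parity (u ++ v) = xorb (vertex_parity u) (vertex_parity v).
Proof.
  induction u as [|g u IH]; simpl; [reflexivity|].
  now rewrite IH, xorb_assoc.
Qed.

Lemma vertex_parity_rev (u : list (gen S)) : vertex_parity (rev u) = vertex_parity u.
Proof.
  induction u as [|g u IH]; simpl; [reflexivity|].
  rewrite vertex_parity_app, IH; simpl.
  now rewrite xorb_false_r, xorb_comm.
Qed.

Lemma vertex_parity_conj (g y : list (gen S)) :
  vertex_parity (g ++ y ++ rev g) = vertex_parity y.
Proof.
  rewrite !vertex_parity_app, vertex_parity_rev.
  destruct (vertex_parity g), (vertex_parity y); reflexivity.
Qed.

Lemma vertex_parity_pw2 (a b : gen S) : vertex_parity (pw2 a b) = false.
Proof. simpl; destruct (at_vertex a), (at_vertex b); reflexivity. Qed.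

Lemma vertex_parity_pw3 (u : S) (i j : idx) : vertex_parity (pw3 (u, i) (u, j)) = false.
Proof.
  unfold vertex_parity, pw3, at_vertex; simpl.
  destruct (excluded_middle_informative (u = s)); reflexivity.
Qed.

Lemma vertex_parity_relator (adj : S -> S -> Prop) (r : list (gen S)) :
  relator adj r -> vertex_parity r = false.
Proof.
  destruct 1; try apply vertex_parity_pw2; try apply vertex_parity_pw3.
  simpl; destruct (at_vertex (s0, i)); reflexivity.
Qed.

Lemma vertex_parity_geq (adj : S -> S -> Prop) (u v : list (gen S)) :
  geq adj u v -> vertex_parity u = vertex_parity v.
Proof.
  induction 1 as [| | |u r v Hr]; try congruence.
  rewrite !vertex_parity_app, (vertex_parity_relator adj r Hr).
  now destruct (vertex_parity u).
Qed.

Lemma vertex_parity_in_S5 (adj : S -> S -> Prop) (t : S) (x : list (gen S)) :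
  t <> s -> in_S5 adj t x -> vertex_parity x = false.
Proof.
  intros hts [w [Hw Hx]].
  rewrite (vertex_parity_geq adj x w Hx); clear Hx.
  induction Hw as [|g w Hg _ IH]; simpl; [reflexivity|].
  simpl in Hg; rewrite IH, at_vertex_false by congruence; reflexivity.
Qed.

End VertexParity.

Theorem lemma4p16 (S : Type) (adj : S -> S -> Prop)
  (adj_sym : forall s t, adj s t -> adj t s)
  (s t : S) (hst : s <> t) :
  ~ S5_conjugate adj s t.
Proof.
  intros [g Hconj].
  assert (Hs1 : in_S5 adj s [(s, I1)]).
  { exists [(s, I1)]; split; [repeat constructor | apply geq_refl]. }
  assert (Ht : in_S5 adj t (g ++ [(s, I1)] ++ rev g)).
  { apply Hconj; exists [(s, I1)]; split; [exact Hs1 | apply geq_refl]. }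
  apply (vertex_parity_in_S5 S s adj t) in Ht; [|congruence].
  rewrite vertex_parity_conj in Ht; simpl in Ht.
  rewrite at_vertex_true in Ht; discriminate.
Qed.
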